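(* Let $s,t,m$ be positive integers with $s\le t$, $s\mid m$, $m\ge t+2$, let $n=m^2$, and let $z=s(\lceil (t+2)/s\rceil-1)$. Let $v(0),\dots,v(m-1)$ be integers with $0\le v(j)\le t-1-(j\bmod s)$ for all $j$ and $v(j)=0$ for $m-z\le j\le m-1$. Then, for any initial configuration of distinct cell values $c_0,\dots,c_{n-1}$, the Block Algorithm (described in the context) terminates, and during its repeat-loop each of the cells $c_0,c_1,\dots,c_{m-3}$ is pushed exactly once.
   Context: Cells $c_0,\dots,c_{n-1}$ are real numbers (indices modulo $n$). For $0\le j\le n-1$ let $l(j)=s\lceil (j-t+1)/s\rceil \bmod n$ and $r(j)=(s\lfloor j/s\rfloor+t-1)\bmod n$. Pushing cell $j$ (''push-to-the-top'') replaces $c_j$ by $\max\{c_{l(j)},c_{l(j)+1},\dots,c_{r(j)}\}+1$ (indices cyclic), leaving other cells unchanged. For $0\le j\le m-3$ define $l'(j)=l(j)$ if $0\le l(j)\le m-3$ and $l'(j)=0$ otherwise, and $r'(j)=r(j)$ if $0\le r(j)\le m-3$ and $r'(j)=m-3$ otherwise. Block Algorithm: (1) push cell $n-1$; (2) set $a_k\leftarrow 0$ for $k=0,\dots,m-3$ and $j\leftarrow 0$; (3) repeat: if $v(j)=\sum_{i=j+1}^{r'(j)}a_i$ and $a_j=0$, then push cell $j$, set $a_j\leftarrow 1$ and $j\leftarrow l'(j)$; otherwise set $j\leftarrow j+1$; until $j=m-2$; (4) push cell $m-2$. *)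

From mathcomp Require Import all_boot all_order all_algebra.
Set Implicit Arguments. Unset Strict Implicit. Unset Printing Implicit Defensive.
Import Order.TTheory GRing.Theory Num.Theory.

(* Push-to-the-top and the Block Algorithm.
   Parameters: s t m (with n = m^2 cells), cell values in a real domain R,
   the integers v(j), cells c : nat -> R (only indices < n are meaningful). *)

Section Block.
Variables (s t m : nat).

Definition ncells : nat := m ^ 2.

(* l(j) = s * ceil((j - t + 1)/s) mod n, computed in int; ceil(x/s) = -floor(-x/s). *)
Definition lZ (j : nat) : int := (s%:Z * (- ((t%:Z - 1 - j%:Z) %/ s%:Z)%Z))%R.
Definition lidx (j : nat) : nat := `|(lZ j %% (ncells%:Z))%Z|%N.

Definition ridx (j : nat) : nat := (s * (j %/ s) + t - 1) %% ncells.

Definition lidx' (j : nat) : nat := if lidx j <= m - 3 then lidx j else 0.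
Definition ridx' (j : nat) : nat := if ridx j <= m - 3 then ridx j else m - 3.

(* i (< n) lies in the cyclic window l, l+1, ..., r (indices mod n) *)
Definition in_window (l r i : nat) : bool :=
  (i + ncells - l) %% ncells <= (r + ncells - l) %% ncells.

Variable R : realDomainType.

Definition push (c : nat -> R) (j : nat) : nat -> R :=
  let l := lidx j in let r := ridx j in
  let M := \big[Num.max/c l]_(i < ncells | in_window l r i) c i in
  fun i => if i == j then (M + 1)%R else c i.

Variable v : nat -> int.

Record state := State { cells : nat -> R; flags : nat -> bool; cur : nat }.

(* one execution of the body of the repeat-loop (step 3);
   returns the new state and the pushed cell, if any *)
Definition loop_body (st : state) : state * option nat :=
  let c := cells st in let a := flags st in let j := cur st in
  if (v j == (\sum_(j.+1 <= i < (ridx' j).+1) (a i : nat))%:Z)%R && ~~ a j then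
    (State (push c j) (fun i => (i == j) || a i) (lidx' j), Some j)
  else (State c a j.+1, None).

Fixpoint run (k : nat) (st : state) : state * seq nat :=
  match k with
  | 0 => (st, [::])
  | k'.+1 => let: (st', ps) := run k' st in
             let: (st'', o) := loop_body st' in
             (st'', ps ++ (if o is Some j then [:: j] else [::]))
  end.

(* state after steps (1) and (2) *)
Definition init_state (c : nat -> R) : state :=
  State (push c (ncells - 1)) (fun _ => false) 0.

End Block.

From mathcomp Require Import all_boot all_order all_algebra zify.
Import Order.TTheory GRing.Theory Num.Theory.
Set Implicit Arguments. Unset Strict Implicit. Unset Printing Implicit Defensive.

(* The cursor only moves right, except after pushing cell j, when it jumps back
   to l'(j) <= j; every push flags a new cell below m - 2, so the pair
   (number of unpushed cells, m - cursor) decreases lexicographically and the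
   loop terminates. Throughout the run an unflagged cell i never has more than
   v(i) flagged cells in its window, and strictly fewer once the cursor has
   passed it. When the cursor reaches m - 2, downward induction shows that
   every cell is flagged: otherwise some unflagged cell has a fully flagged
   window, of size r'(i) - i >= v(i) by the hypotheses on v. *)

Section Indices.
Variables (s t m : nat).
Hypotheses (s_gt0 : 0 < s) (s_le_t : s <= t) (tm : t + 2 <= m).

Lemma ridxE j : j <= m - 3 -> ridx s t m j = s * (j %/ s) + t - 1.
Proof.
move=> jm; rewrite /ridx /ncells modn_small //.
have := leq_divM j s; rewrite mulnC; nia.
Qed.

Lemma ridx'_bound j : ridx' s t m j <= m - 3.
Proof. by rewrite /ridx'; case: ifP. Qed.

Lemma ridx'_le_ridx j : ridx' s t m j <= ridx s t m j.
Proof. by rewrite /ridx'; case: ifP => // /negbT; rewrite -ltnNge => /ltnW. Qed.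

Lemma leq_ridx' j : j <= m - 3 -> j <= ridx' s t m j.
Proof.
move=> jm; rewrite /ridx'; case: ifP => _ //.
rewrite ridxE //; have := divn_eq j s; have := ltn_pmod j s_gt0; nia.
Qed.

Lemma lidx_spec j : j <= m - 3 -> lidx s t m j <= m - 3 ->
  s %| lidx s t m j /\ lidx s t m j + t <= j + s.
Proof.
(* l(j) lies in (-n, m); a negative value would wrap to at least n - m > m - 3. *)
rewrite /lidx /lZ /ncells => jm.
set y := (t%:Z - 1 - j%:Z)%R.
have y_eq := divz_eq y s%:Z.
have ge0_r : (0 <= (y %% s%:Z)%Z)%R by apply: modz_ge0; lia.
have lt_r : ((y %% s%:Z)%Z < s%:Z)%R by apply: ltz_pmod; lia.
set q := (y %/ s%:Z)%Z in y_eq *; set r := (y %% s%:Z)%Z in y_eq ge0_r lt_r.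
set L := (s%:Z * - q)%R; set n := (m ^ 2)%N.
have n_ge : (3 * m <= n)%N by rewrite /n; nia.
have L_eq := divz_eq L n%:Z.
have ge0_e : (0 <= (L %% n%:Z)%Z)%R by apply: modz_ge0; lia.
have lt_e : ((L %% n%:Z)%Z < n%:Z)%R by apply: ltz_pmod; lia.
set d := (L %/ n%:Z)%Z in L_eq; set e := (L %% n%:Z)%Z in L_eq ge0_e lt_e * => e_le.
have d0 : d = 0%R by rewrite /L in L_eq; nia.
have e_eq : `|e|%N = (s * `|q|)%N by rewrite /L in L_eq; nia.
rewrite e_eq dvdn_mulr //; split=> //; nia.
Qed.

Lemma lidx'_le j : j <= m - 3 -> lidx' s t m j <= j.
Proof.
rewrite /lidx' => jm; case: ifP => // lm.
by have [_] := lidx_spec jm lm; lia.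
Qed.

(* Pushing cell [j] leaves the window sums of all cells left of the restart point unchanged. *)
Lemma ridx'_lt_of_lt_lidx' i j : j <= m - 3 -> i < lidx' s t m j -> ridx' s t m i < j.
Proof.
move=> jm i_lt; have := lidx'_le jm; move: i_lt; rewrite /lidx'.
case: ifP => [lm i_lt _|]; last by rewrite ltn0.
have [/dvdnP[q l_eq] l_le] := lidx_spec jm lm; rewrite l_eq in i_lt l_le lm.
apply: leq_ltn_trans (ridx'_le_ridx i) _; rewrite ridxE; last by lia.
have : i %/ s < q by rewrite ltn_divLR.
nia.
Qed.

Hypothesis s_dvd_m : s %| m.

Lemma ridx'E i : i < m - s * ((t + 2 + s - 1) %/ s - 1) ->
  ridx' s t m i = s * (i %/ s) + t - 1.
Proof.
rewrite mulnBr muln1 => i_lt; have [M m_eq] := dvdnP s_dvd_m.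
have p_eq := divn_eq (t + 2 + s - 1) s; have := ltn_pmod (t + 2 + s - 1) s_gt0.
set p := (t + 2 + s - 1) %/ s in i_lt p_eq *.
have i_eq := divn_eq i s; have := ltn_pmod i s_gt0.
set q := i %/ s in i_eq *.
have qp : q + p <= M.
  rewrite leqNgt; apply/negP => lt_M; have := leq_mul2r s M.+1 (q + p).
  rewrite lt_M orbT; lia.
have : (q + p) * s <= M * s by rewrite leq_mul2r qp orbT.
move=> ? ? ?; have i_le : s * q + t - 1 <= m - 3 by lia.
by rewrite /ridx' ridxE ?i_le //; lia.
Qed.

End Indices.

Lemma sum_set_flag (a : nat -> bool) j lo hi : a j = false ->
  \sum_(lo <= k < hi) ((k == j) || a k : nat) =
  \sum_(lo <= k < hi) (a k : nat) + (lo <= j < hi).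
Proof.
move=> aj; have -> : (lo <= j < hi : nat) = \sum_(lo <= k < hi | k == j) 1.
  by rewrite big_nat1_eq; case: (_ && _).
rewrite [X in _ + X]big_mkcond -big_split /=.
by apply: eq_bigr => k _; case: eqVneq => [->|]; rewrite ?aj //= addn0.
Qed.

Definition seq_of_opt (o : option nat) : seq nat := if o is Some j then [:: j] else [::].

Section Algorithm.
Variables (R : realDomainType) (s t m : nat) (v : nat -> int).

Local Notation step := (loop_body s t m v).
Local Notation run := (run s t m v).

Lemma runS k (st : state R) :
  run k.+1 st = ((step (run k st).1).1, (run k st).2 ++ seq_of_opt (step (run k st).1).2).
Proof. by rewrite /=; case: (run k st) => st' ps /=; case: step. Qed.

Lemma runS_first k (st : state R) :
  run k.+1 st = ((run k (step st).1).1, seq_of_opt (step st).2 ++ (run k (step st).1).2).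
Proof.
elim: k st => [|k IH] st; first by rewrite /=; case: step => st' o; rewrite /= cats0.
by rewrite [LHS]runS IH [in RHS]runS /= catA.
Qed.

Definition flag_sum (a : nat -> bool) j := \sum_(j.+1 <= i < (ridx' s t m j).+1) (a i : nat).

(* Unpushed cells are never over-counted, and an unpushed cell already passed
   by the cursor is strictly under-counted, so it cannot be pushed before the
   cursor returns to it. *)
Record invariant (st : state R) (ps : seq nat) : Prop := Invariant {
  flagsE : forall i, flags st i = (i \in ps);
  pushed_uniq : uniq ps;
  pushed_lt : all (fun i => i < m - 2) ps;
  cur_le : cur st <= m - 2;
  flag_sum_le : forall i, i < m - 2 -> ~~ flags st i -> (Posz (flag_sum (flags st) i) <= v i)%R;
  flag_sum_lt : forall i, i < cur st -> ~~ flags st i -> (Posz (flag_sum (flags st) i) < v i)%R }.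

Definition potential (st : state R) (ps : seq nat) := (m - 2 - size ps) * m + (m - cur st).

Lemma size_pushed st ps : invariant st ps -> size ps <= m - 2.
Proof.
case=> _ uniq_ps lt_ps _ _ _; rewrite -(size_iota 0 (m - 2)) uniq_leq_size // => i i_ps.
by rewrite mem_iota add0n (allP lt_ps).
Qed.

Hypotheses (s_gt0 : 0 < s) (s_le_t : s <= t) (tm : t + 2 <= m).

Lemma invariant_push (c : nat -> R) a j ps :
  invariant (State c a j) ps -> j < m - 2 -> v j = Posz (flag_sum a j) -> ~~ a j ->
  invariant (State (push s t m c j) (fun i => (i == j) || a i) (lidx' s t m j))
            (ps ++ [:: j]).
Proof.
case=> /= flE uniq_ps lt_ps _ sum_le sum_lt j_lt vj aj.
have jm : j <= m - 3 by lia.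
have l_le := lidx'_le s_gt0 s_le_t tm jm.
have sumE i : flag_sum (fun i => (i == j) || a i) i =
              flag_sum a i + (i.+1 <= j < (ridx' s t m i).+1).
  by rewrite /flag_sum sum_set_flag //; apply/negbTE.
split=> /=.
- by move=> i; rewrite flE mem_cat mem_seq1 orbC.
- by rewrite cat_uniq uniq_ps /= andbT orbF -flE.
- by rewrite all_cat lt_ps /= j_lt.
- lia.
- move=> i i_lt; rewrite negb_or => /andP[ij ai]; rewrite sumE.
  have [in_win|_] := boolP (i.+1 <= j < _); last by rewrite addn0 sum_le.
  by rewrite PoszD lezD1 sum_lt //; case/andP: in_win.
- move=> i i_lt; rewrite negb_or => /andP[ij ai]; rewrite sumE.
  have /negbTE-> : ~~ (i.+1 <= j < (ridx' s t m i).+1).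
    by apply/negP => /andP[_]; rewrite ltnS leqNgt (ridx'_lt_of_lt_lidx' s_gt0 s_le_t tm jm i_lt).
  by rewrite addn0 sum_lt //; lia.
Qed.

Lemma invariant_skip (c : nat -> R) a j ps :
  invariant (State c a j) ps -> j < m - 2 -> ~~ ((v j == Posz (flag_sum a j)) && ~~ a j) ->
  invariant (State c a j.+1) ps.
Proof.
case=> /= flE uniq_ps lt_ps _ sum_le sum_lt j_lt no_push; split=> //= i.
rewrite ltnS leq_eqVlt => /orP[/eqP-> aj|]; last exact: sum_lt.
by rewrite lt_neqAle sum_le // andbT eq_sym; move: no_push; rewrite aj andbT.
Qed.

Lemma step_invariant (st : state R) ps : invariant st ps -> cur st < m - 2 ->
  invariant (step st).1 (ps ++ seq_of_opt (step st).2) /\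
  potential (step st).1 (ps ++ seq_of_opt (step st).2) < potential st ps.
Proof.
case: st => c a j inv /= j_lt; rewrite /loop_body /=.
case: ifP => [/andP[/eqP vj aj]|no_push]; last first.
  rewrite /= cats0; split; last by rewrite /potential /=; lia.
  exact: invariant_skip inv j_lt (negbT no_push).
have inv' := invariant_push inv j_lt vj aj; split=> //.
have jm : j <= m - 3 by lia.
have := size_pushed inv'; have := lidx'_le s_gt0 s_le_t tm jm.
rewrite /potential size_cat /=; nia.
Qed.

Lemma run_until_done (st : state R) ps : invariant st ps -> cur st < m - 2 ->
  exists K, [/\ 0 < K, cur (run K st).1 = m - 2,
    (forall k, 0 < k < K -> cur (run k st).1 <> m - 2)
    & invariant (run K st).1 (ps ++ (run K st).2)].
Proof.
have [N] := ubnP (potential st ps); elim: N => // N IH in st ps *.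
move=> pot_lt inv j_lt; have [inv' pot_dec] := step_invariant inv j_lt.
have [done1|not_done1] := eqVneq (cur (step st).1) (m - 2).
  by exists 1; split=> //; [rewrite runS_first | lia | rewrite runS_first /= cats0].
have j'_lt : cur (step st).1 < m - 2 by rewrite ltn_neqAle not_done1 (cur_le inv').
have [K [K_gt0 done_K before_K invK]] := IH _ _ (leq_trans pot_dec pot_lt) inv' j'_lt.
exists K.+1; split=> //; first by rewrite runS_first.
  case=> [|[|k]] k_lt //; first by rewrite runS_first; apply/eqP.
  by rewrite runS_first; apply: before_K.
by rewrite runS_first /= catA.
Qed.

Lemma flag_sum_full (a : nat -> bool) i :
  (forall k, i < k <= ridx' s t m i -> a k) -> flag_sum a i = ridx' s t m i - i.
Proof.
move=> full; rewrite /flag_sum (eq_big_nat _ _ (F2 := fun=> 1)).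
  by rewrite sum_nat_const_nat muln1 subSS.
by move=> k /andP[ik kr]; rewrite full // ik -ltnS.
Qed.

Hypotheses (s_dvd_m : s %| m)
  (v_bounds : forall j, j < m -> (0 <= v j)%R /\ (v j <= t%:Z - 1 - (j %% s)%:Z)%R)
  (v_tail : forall j, m - s * ((t + 2 + s - 1) %/ s - 1) <= j -> j < m -> v j = 0%R).

Lemma v_le_window i : i < m - 2 -> (v i <= Posz (ridx' s t m i - i))%R.
Proof.
move=> i_lt; have [tail_i|head_i] := leqP (m - s * ((t + 2 + s - 1) %/ s - 1)) i.
  by rewrite v_tail //; lia.
have i_ltm : i < m by lia.
rewrite ridx'E //; have [_] := v_bounds i_ltm.
have := divn_eq i s; have := ltn_pmod i s_gt0.
move: (i %/ s) (i %% s) => q r; rewrite (mulnC q s); move: (s * q) => sq; lia.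
Qed.

Lemma all_flagged (st : state R) ps : invariant st ps -> cur st = m - 2 ->
  forall i, i < m - 2 -> flags st i.
Proof.
move=> inv done_st; suff flagged d i : i < m - 2 -> m - 2 - i <= d -> flags st i.
  by move=> i i_lt; apply: (flagged (m - 2 - i)).
elim: d i => [|d IH] i i_lt d_ge; first lia.
apply/negPn/negP => not_flagged.
have i_le : i <= ridx' s t m i by apply: leq_ridx'; lia.
have sumE : flag_sum (flags st) i = ridx' s t m i - i.
  apply: flag_sum_full => k /andP[ik kr]; apply: IH; have := ridx'_bound s t m i; lia.
have := flag_sum_le inv i_lt not_flagged.
have := @flag_sum_lt _ _ inv i; rewrite done_st sumE => /(_ i_lt not_flagged).
have := v_le_window i_lt; lia.
Qed.

End Algorithm.

Theorem lemma8 (R : realDomainType) (s t m : nat) (v : nat -> int) (c0 : nat -> R) :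
  0 < s -> 0 < t -> 0 < m -> s <= t -> s %| m -> t + 2 <= m ->
  let n := m ^ 2 in
  let z := s * ((t + 2 + s - 1) %/ s - 1) in
  (forall j, j < m -> (0 <= v j)%R /\ (v j <= t%:Z - 1 - (j %% s)%:Z)%R) ->
  (forall j, m - z <= j -> j < m -> v j = 0%R) ->
  (forall i j, i < n -> j < n -> c0 i = c0 j -> i = j) ->
  exists K : nat,
    [/\ 0 < K,
        cur (run s t m v K (init_state s t m c0)).1 = m - 2,
        (forall k, 0 < k < K -> cur (run s t m v k (init_state s t m c0)).1 <> m - 2)
      & (forall i, i < m - 2 ->
           count_mem i (run s t m v K (init_state s t m c0)).2 = 1)].
Proof.
(* Cell values never influence the flags or the cursor, so the distinctness of [c0] is not needed. *)
move=> s_gt0 _ _ s_le_t s_dvd_m tm n z v_bounds v_tail _.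
have m2_gt0 : 0 < m - 2 by lia.
have inv0 : invariant s t m v (init_state s t m c0) [::].
  split=> //= i i_lt _; rewrite /flag_sum big1 //.
  by have /v_bounds[] : i < m by lia.
have [K [K_gt0 done_K before_K invK]] := run_until_done s_gt0 s_le_t tm inv0 m2_gt0.
exists K; split=> // i i_lt.
rewrite count_uniq_mem ?(pushed_uniq invK) // -(flagsE invK).
by rewrite (all_flagged s_gt0 s_le_t tm s_dvd_m v_bounds v_tail invK done_K i_lt).
Qed.
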